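(* Let $M$ be a magma satisfying $(xy)z = xz$ and $x(yz) = xy$ for all $x,y,z\in M$. Then $M$ satisfies $xy = xz$ and $(xy)z = xy$ for all $x,y,z\in M$ if and only if $M$ avoids both magmas $M_1$ (on $\{0,1,2\}$) and $M_2$ (on $\{0,1,2,3\}$) with Cayley tables \[ \begin{array}{c|ccc} M_1 & 0 & 1 & 2 \\ \hline 0 & 0 & 2 & 0 \\ 1 & 1 & 1 & 1 \\ 2 & 0 & 2 & 0 \end{array} \qquad \begin{array}{c|cccc} M_2 & 0 & 1 & 2 & 3 \\ \hline 0 & 0 & 2 & 0 & 2 \\ 1 & 1 & 3 & 1 & 3 \\ 2 & 0 & 2 & 0 & 2 \\ 3 & 1 & 3 & 1 & 3 \end{array}. \]
   Context: A magma is a nonempty set with a binary operation, written by juxtaposition. A magma $M$ avoids a magma $F$ if no submagma of $M$ is isomorphic to $F$. In the Cayley tables, the entry in row $i$, column $j$ is $i\cdot j$. *)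

From mathcomp Require Import all_boot.
Set Implicit Arguments. Unset Strict Implicit. Unset Printing Implicit Defensive.

Definition table_op (n : nat) (tbl : seq (seq nat)) (i j : 'I_n.+1) : 'I_n.+1 :=
  inord (nth 0 (nth [::] tbl i) j).

Definition M1_table : seq (seq nat) :=
  [:: [:: 0; 2; 0];
      [:: 1; 1; 1];
      [:: 0; 2; 0]].
Definition M1_op : 'I_3 -> 'I_3 -> 'I_3 := @table_op 2 M1_table.

Definition M2_table : seq (seq nat) :=
  [:: [:: 0; 2; 0; 2];
      [:: 1; 3; 1; 3];
      [:: 0; 2; 0; 2];
      [:: 1; 3; 1; 3]].
Definition M2_op : 'I_4 -> 'I_4 -> 'I_4 := @table_op 3 M2_table.

Definition submagma (T : Type) (op : T -> T -> T) (S : T -> Prop) : Prop :=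
  (exists x, S x) /\ (forall x y, S x -> S y -> S (op x y)).

Definition iso_to_sub (F T : Type) (fop : F -> F -> F) (op : T -> T -> T)
    (S : T -> Prop) : Prop :=
  exists f : F -> T,
    (forall a b, f a = f b -> a = b) /\
    (forall x, S x <-> exists a, f a = x) /\
    (forall a b, f (fop a b) = op (f a) (f b)).

Definition avoids (T F : Type) (op : T -> T -> T) (fop : F -> F -> F) : Prop :=
  ~ (exists S : T -> Prop, submagma op S /\ iso_to_sub fop op S).

From mathcomp Require Import all_boot.
From Stdlib Require Import Classical.

Set Implicit Arguments.
Unset Strict Implicit.
Unset Printing Implicit Defensive.

(* Under (xy)z = xz and x(yz) = xy a product only depends on the leftmost
   letters of its two factors.  Hence if xy <> xx, then u := xx and v := yx
   satisfy uu = u, vu = v and uv = xy <> u, and the elements u, v, uv, vv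
   multiply exactly like 0, 1, 2, 3 in M2; they are pairwise distinct unless
   vv = v, in which case u, v, uv form a copy of M1.  Conversely, rows that are
   constant pass to submagmas, and M1, M2 have non-constant rows. *)

Definition embeds (F T : Type) (fop : F -> F -> F) (op : T -> T -> T) : Prop :=
  exists f : F -> T, injective f /\ {morph f : a b / fop a b >-> op a b}.

Definition left_constant (T : Type) (op : T -> T -> T) : Prop :=
  forall x y z, op x y = op x z.

Lemma avoidsP (F T : Type) (fop : F -> F -> F) (op : T -> T -> T) :
  inhabited F -> avoids op fop <-> ~ embeds fop op.
Proof.
move=> [a0]; split=> [avoid [f [f_inj f_morph]] | no_emb [S [_ [f [f_inj [_ f_morph]]]]]].
  apply: avoid; exists (fun t => exists a, f a = t); split; last by exists f.
  split=> [|_ _ [a <-] [b <-]]; first by exists (f a0), a0.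
  by exists (fop a b); rewrite f_morph.
by apply: no_emb; exists f.
Qed.

Lemma left_constant_embeds (F T : Type) (fop : F -> F -> F) (op : T -> T -> T) :
  embeds fop op -> left_constant op -> left_constant fop.
Proof.
by move=> [f [f_inj f_morph]] lc x y z; apply: f_inj; rewrite !f_morph (lc _ _ (f z)).
Qed.

Lemma M1_not_left_constant : ~ left_constant M1_op.
Proof. by move/(_ ord0 ord0 (inord 1))/(congr1 val); rewrite /= !inordK. Qed.

Lemma M2_not_left_constant : ~ left_constant M2_op.
Proof. by move/(_ ord0 ord0 (inord 1))/(congr1 val); rewrite /= !inordK. Qed.

Lemma nth_pairwise_distinct_inj (T : Type) (x0 : T) (s : seq T) :
  (forall i j : 'I_(size s), i < j -> nth x0 s i <> nth x0 s j) ->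
  injective (fun i : 'I_(size s) => nth x0 s i).
Proof.
move=> distinct i j eq_ij.
case: (ltngtP i j) => [lt_ij | lt_ji | /val_inj //].
  by case: (distinct i j lt_ij).
by case: (distinct j i lt_ji).
Qed.

Section LeftmostLetters.

Variables (T : Type) (op : T -> T -> T).
Hypotheses (opKl : forall x y z, op (op x y) z = op x z)
           (opKr : forall x y z, op x (op y z) = op x y).

Variables u v : T.
Hypotheses (uu : op u u = u) (vu : op v u = v) (uv_neq_u : op u v <> u).

Lemma u_neq_v : u <> v.
Proof. by move=> eq_uv; apply: uv_neq_u; rewrite -eq_uv uu. Qed.

Lemma uv_neq_v : op u v <> v.
Proof. by move=> eq_uv; apply: uv_neq_u; rewrite -eq_uv opKr uu. Qed.

Lemma vv_neq_u : op v v <> u.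
Proof. by move=> eq_vv; apply: u_neq_v; rewrite -vu -eq_vv opKr. Qed.

Lemma vv_neq_uv : op v v <> op u v.
Proof. by move=> eq_vv; apply: u_neq_v; rewrite -uu -(opKl u v) -eq_vv opKl vu. Qed.

Lemma M1_embeds : op v v = v -> embeds M1_op op.
Proof.
move=> vv; exists (fun i : 'I_3 => nth u [:: u; v; op u v] i); split.
  apply: (@nth_pairwise_distinct_inj _ u [:: u; v; op u v])
    => -[[|[|[|?]]] ?] [[|[|[|?]]] ?] //= _.
  - exact: u_neq_v.
  - by move/esym.
  - by move/esym; apply: uv_neq_v.
move=> [[|[|[|i]]] ?] [[|[|[|j]]] ?] //=; rewrite /M1_op /table_op inordK //=;
  by rewrite ?opKl ?opKr ?uu ?vu ?vv.
Qed.

Lemma M2_embeds : op v v <> v -> embeds M2_op op.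
Proof.
move=> vv_neq_v; exists (fun i : 'I_4 => nth u [:: u; v; op u v; op v v] i); split.
  apply: (@nth_pairwise_distinct_inj _ u [:: u; v; op u v; op v v])
    => -[[|[|[|[|?]]]] ?] [[|[|[|[|?]]]] ?] //= _.
  - exact: u_neq_v.
  - by move/esym.
  - by move/esym; apply: vv_neq_u.
  - by move/esym; apply: uv_neq_v.
  - by move/esym.
  - by move/esym; apply: vv_neq_uv.
move=> [[|[|[|[|i]]]] ?] [[|[|[|[|j]]]] ?] //=; rewrite /M2_op /table_op inordK //=;
  by rewrite ?opKl ?opKr ?uu ?vu.
Qed.

End LeftmostLetters.

Lemma left_constant_of_avoids (T : Type) (op : T -> T -> T) :
  (forall x y z, op (op x y) z = op x z) ->
  (forall x y z, op x (op y z) = op x y) ->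
  ~ embeds M1_op op -> ~ embeds M2_op op -> left_constant op.
Proof.
move=> opKl opKr no_M1 no_M2 x y z.
suff row_x : forall w, op x w = op x x by rewrite !row_x.
move=> w; apply: NNPP => xw_neq_xx.
have uu : op (op x x) (op x x) = op x x by rewrite opKl opKr.
have vu : op (op w x) (op x x) = op w x by rewrite !opKr.
have uv_neq_u : op (op x x) (op w x) <> op x x by rewrite opKl opKr.
case: (classic (op (op w x) (op w x) = op w x)) => [vv | vv_neq_v].
- exact: no_M1 (M1_embeds opKl opKr uu vu uv_neq_u vv).
- exact: no_M2 (M2_embeds opKl opKr uu vu uv_neq_u vv_neq_v).
Qed.

Theorem mainTheorem16 (T : Type) (op : T -> T -> T) :
  inhabited T ->
  (forall x y z, op (op x y) z = op x z) ->
  (forall x y z, op x (op y z) = op x y) ->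
  ((forall x y z, op x y = op x z) /\ (forall x y z, op (op x y) z = op x y))
  <-> (avoids op M1_op /\ avoids op M2_op).
Proof.
have inhabited_M1 := inhabits (ord0 : 'I_3).
have inhabited_M2 := inhabits (ord0 : 'I_4).
move=> _ opKl opKr; split.
  move=> [lc _]; split; apply/avoidsP => // emb.
  - exact/M1_not_left_constant/(left_constant_embeds emb).
  - exact/M2_not_left_constant/(left_constant_embeds emb).
move=> [/(avoidsP _ _ inhabited_M1) no_M1 /(avoidsP _ _ inhabited_M2) no_M2].
have lc := left_constant_of_avoids opKl opKr no_M1 no_M2.
by split=> // x y z; rewrite opKl.
Qed.
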